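(* Consider the stochastic MPC scheme described in the context: the system $x(k+1)=Ax(k)+Bu(k)+w(k)$ under the control law $u(k)=Ke_0(k)+v_0^*(k)$ resulting from problem $(\mathcal{P}_k)$ (feasible at the time steps at which it is applied), with nominal update $z_0(k)=z_1(k-1)$ and $z(0)=x(0)$. Then the resulting closed-loop states $x(k)$ and inputs $u(k)$ satisfy the chance constraints $\Pr(x(k)\in\mathcal{X}\mid x(0))\ge p_x$ and $\Pr(u(k)\in\mathcal{U}\mid x(0))\ge p_u$.
   Context: System: $x(k+1)=Ax(k)+Bu(k)+w(k)$ with $x(k)\in\mathbb{R}^{n_x}$, $u(k)\in\mathbb{R}^{n_u}$, over a finite horizon $\bar N$; the disturbance sequence $W=[w(0)^\top,\dots,w(\bar N)^\top]^\top$ is a random vector with distribution $\mathcal{D}^W$ (not necessarily i.i.d. or zero mean). $\mathcal{X}\subseteq\mathbb{R}^{n_x}$, $\mathcal{U}\subseteq\mathbb{R}^{n_u}$ convex sets, $p_x,p_u$ probability levels; $\mathcal{A}\ominus\mathcal{B}=\{a\in\mathcal{A}: a+b\in\mathcal{A}\ \forall b\in\mathcal{B}\}$. A fixed gain $K$ is given. Let $e$ denote the process $e(k+1)=(A+BK)e(k)+w(k)$. For each $0\le k\le\bar N$, $\mathcal{R}^x_k$ is a set with $\Pr(e(k)\in\mathcal{R}^x_k\mid e(0)=0)\ge p_x$ and $\mathcal{R}^u_k$ a set with $\Pr(Ke(k)\in\mathcal{R}^u_k\mid Ke(0)=0)\ge p_u$. $\mathcal{Z}_f$ is a terminal set. Problem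 $(\mathcal{P}_k)$ at time $k$: minimize over $v_0,\dots,v_{N-1}$ the cost $\mathbb{E}_{W_k}\big(l_f(x_N)+\sum_{i=0}^{N-1}l_{k+i}(x_i,u_i)\big)$ subject to $x_i=z_i+e_i$, $u_i=Ke_i+v_i$, $z_{i+1}=Az_i+Bv_i$, $e_{i+1}=(A+BK)e_i+w_i$, where $W_k=[w_0^\top,\dots,w_N^\top]^\top$ has the conditional distribution of $[w(k)^\top,\dots,w(k+N)^\top]^\top$ given the realized $[w(0)^\top,\dots,w(k-1)^\top]^\top$; constraints $z_i\in\mathcal{X}\ominus\mathcal{R}^x_{i+k}$, $v_i\in\mathcal{U}\ominus\mathcal{R}^u_{i+k}$ ($i=0,\dots,N-1$), $z_N\in\mathcal{Z}_f$; initialization $x_0=x(k)$, $z_0=z_1(k-1)$ (with $z_0(0)=x(0)$), $e_0=x_0-z_0$. The applied input is $u(k)=Ke_0(k)+v_0^*(k)$ with $v^*(k)$ optimal for $(\mathcal{P}_k)$. *)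

From HB Require Import structures.
From mathcomp Require Import all_boot all_order all_algebra.
From mathcomp Require Import all_classical all_reals.
From mathcomp Require Import ereal measure probability.

Set Implicit Arguments.
Unset Strict Implicit.
Unset Printing Implicit Defensive.

Import Order.TTheory GRing.Theory Num.Theory.
Local Open Scope ring_scope.
Local Open Scope classical_set_scope.

Definition pdiff (V : zmodType) (A B : set V) : set V :=
  [set a | A a /\ forall b, B b -> A (a + b)].

Definition convex_vset (R : realType) (n : nat) (S : set 'cV[R]_n) : Prop :=
  forall a b (l : R), 0 <= l <= 1 -> S a -> S b -> S (l *: a + (1 - l) *: b).

Fixpoint nominal (R : realType) (nx nu : nat) (A : 'M[R]_nx) (B : 'M[R]_(nx, nu))
  (z0 : 'cV[R]_nx) (v : nat -> 'cV[R]_nu) (i : nat) : 'cV[R]_nx :=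
  match i with
  | 0 => z0
  | i'.+1 => A *m nominal A B z0 v i' + B *m v i'
  end.

Definition feasibleP (R : realType) (nx nu N : nat) (A : 'M[R]_nx) (B : 'M[R]_(nx, nu))
  (X : set 'cV[R]_nx) (U : set 'cV[R]_nu)
  (Rx : nat -> set 'cV[R]_nx) (Ru : nat -> set 'cV[R]_nu) (Zf : set 'cV[R]_nx)
  (k : nat) (z0 : 'cV[R]_nx) (v : nat -> 'cV[R]_nu) : Prop :=
  (forall i, (i < N)%N ->
      pdiff X (Rx (i + k)%N) (nominal A B z0 v i) /\ pdiff U (Ru (i + k)%N) (v i))
  /\ Zf (nominal A B z0 v N).

Fixpoint eproc (R : realType) (nx nu : nat) (T : Type) (A : 'M[R]_nx) (B : 'M[R]_(nx, nu))
  (K : 'M[R]_(nu, nx)) (w : nat -> T -> 'cV[R]_nx) (k : nat) (t : T) : 'cV[R]_nx :=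
  match k with
  | 0 => 0
  | k'.+1 => (A + B *m K) *m eproc A B K w k' t + w k' t
  end.

(* closed loop: pair (x(k), z_0(k)); pol k t x z is the sequence v^*(k) returned at time k *)
Fixpoint closed_loop (R : realType) (nx nu : nat) (T : Type) (A : 'M[R]_nx) (B : 'M[R]_(nx, nu))
  (K : 'M[R]_(nu, nx)) (w : nat -> T -> 'cV[R]_nx) (x0 : 'cV[R]_nx)
  (pol : nat -> T -> 'cV[R]_nx -> 'cV[R]_nx -> nat -> 'cV[R]_nu)
  (k : nat) (t : T) : 'cV[R]_nx * 'cV[R]_nx :=
  match k with
  | 0 => (x0, x0)
  | k'.+1 =>
      let xz := closed_loop A B K w x0 pol k' t in
      let x := xz.1 in let z := xz.2 in
      let v := pol k' t x z in
      (A *m x + B *m (K *m (x - z) + v 0%N) + w k' t, A *m z + B *m v 0%N)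
  end.

Definition cl_state (R : realType) (nx nu : nat) (T : Type) (A : 'M[R]_nx) (B : 'M[R]_(nx, nu))
  (K : 'M[R]_(nu, nx)) (w : nat -> T -> 'cV[R]_nx) (x0 : 'cV[R]_nx)
  (pol : nat -> T -> 'cV[R]_nx -> 'cV[R]_nx -> nat -> 'cV[R]_nu) (k : nat) (t : T) : 'cV[R]_nx :=
  (closed_loop A B K w x0 pol k t).1.

Definition cl_nominal (R : realType) (nx nu : nat) (T : Type) (A : 'M[R]_nx) (B : 'M[R]_(nx, nu))
  (K : 'M[R]_(nu, nx)) (w : nat -> T -> 'cV[R]_nx) (x0 : 'cV[R]_nx)
  (pol : nat -> T -> 'cV[R]_nx -> 'cV[R]_nx -> nat -> 'cV[R]_nu) (k : nat) (t : T) : 'cV[R]_nx :=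
  (closed_loop A B K w x0 pol k t).2.

Definition cl_input (R : realType) (nx nu : nat) (T : Type) (A : 'M[R]_nx) (B : 'M[R]_(nx, nu))
  (K : 'M[R]_(nu, nx)) (w : nat -> T -> 'cV[R]_nx) (x0 : 'cV[R]_nx)
  (pol : nat -> T -> 'cV[R]_nx -> 'cV[R]_nx -> nat -> 'cV[R]_nu) (k : nat) (t : T) : 'cV[R]_nu :=
  let x := cl_state A B K w x0 pol k t in
  let z := cl_nominal A B K w x0 pol k t in
  K *m (x - z) + pol k t x z 0%N.

From HB Require Import structures.
From mathcomp Require Import all_boot all_order all_algebra.
From mathcomp Require Import all_classical all_reals.
From mathcomp Require Import ereal measure probability.

Set Implicit Arguments.
Unset Strict Implicit.
Unset Printing Implicit Defensive.

Import Order.TTheory GRing.Theory Num.Theory.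
Local Open Scope ring_scope.
Local Open Scope classical_set_scope.

(* Since z_0(0) = x(0) and the nominal state is propagated without the
   disturbance, x(k) - z_0(k) evolves exactly as the error process e(k)
   started at 0.  Feasibility of (P_k) puts z_0(k) in X ⊖ R^x_k, so the event
   {e(k) ∈ R^x_k}, of probability at least p_x, is contained in {x(k) ∈ X};
   likewise u(k) = v_0^*(k) + K e(k) with v_0^*(k) ∈ U ⊖ R^u_k. *)

Lemma pdiff_addr (V : zmodType) (S E : set V) (z e : V) :
  pdiff S E z -> E e -> S (z + e).
Proof. by case=> _; apply. Qed.

Lemma measure_tightened_ge (R : realType) (d : measure_display)
    (T : measurableType d) (mu : {measure set T -> \bar R})
    (V : zmodType) (S E : set V) (x z e : T -> V) (p : \bar R) :
  measurable [set t | E (e t)] -> measurable [set t | S (x t)] ->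
  (forall t, x t = z t + e t) -> (forall t, pdiff S E (z t)) ->
  (p <= mu [set t | E (e t)])%E -> (p <= mu [set t | S (x t)])%E.
Proof.
move=> mE mS xE zS /le_trans; apply; apply: le_measure; rewrite ?inE //.
by move=> t /= Ee; rewrite xE; apply: pdiff_addr Ee.
Qed.

Section ClosedLoop.

Variables (R : realType) (nx nu : nat) (T : Type).
Variables (A : 'M[R]_nx) (B : 'M[R]_(nx, nu)) (K : 'M[R]_(nu, nx)).
Variables (w : nat -> T -> 'cV[R]_nx) (x0 : 'cV[R]_nx).
Variable pol : nat -> T -> 'cV[R]_nx -> 'cV[R]_nx -> nat -> 'cV[R]_nu.

Local Notation x := (cl_state A B K w x0 pol).
Local Notation z := (cl_nominal A B K w x0 pol).
Local Notation e := (eproc A B K w).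

Lemma cl_stateE k t : x k t = z k t + e k t.
Proof.
rewrite /cl_state /cl_nominal; elim: k => [|k IH] /=; first by rewrite addr0.
rewrite IH [_ + e k t]addrC addrK !mulmxDr mulmxDl mulmxA.
by rewrite addrACA [RHS]addrCA [RHS]addrA.
Qed.

Lemma cl_inputE k t :
  cl_input A B K w x0 pol k t = pol k t (x k t) (z k t) 0%N + K *m e k t.
Proof. by rewrite /cl_input /= {1}cl_stateE [z k t + _]addrC addrK addrC. Qed.

End ClosedLoop.

Theorem theorem2
  (R : realType) (d : measure_display) (T : measurableType d) (P : probability T R)
  (nx nu N Nbar : nat)
  (A : 'M[R]_nx) (B : 'M[R]_(nx, nu)) (K : 'M[R]_(nu, nx))
  (w : nat -> T -> 'cV[R]_nx)
  (X : set 'cV[R]_nx) (U : set 'cV[R]_nu) (px pu : R)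
  (Rx : nat -> set 'cV[R]_nx) (Ru : nat -> set 'cV[R]_nu) (Zf : set 'cV[R]_nx)
  (J : nat -> T -> 'cV[R]_nx -> 'cV[R]_nx -> (nat -> 'cV[R]_nu) -> \bar R)
  (x0 : 'cV[R]_nx)
  (pol : nat -> T -> 'cV[R]_nx -> 'cV[R]_nx -> nat -> 'cV[R]_nu) :
  (0 < N)%N ->
  convex_vset X -> convex_vset U ->
  0 <= px <= 1 -> 0 <= pu <= 1 ->
  (* probabilistic reachable sets of the error process e(k+1)=(A+BK)e(k)+w(k), e(0)=0 *)
  (forall k, (k <= Nbar)%N ->
     measurable [set t | Rx k (eproc A B K w k t)] /\
     (px%:E <= P [set t | Rx k (eproc A B K w k t)])%E) ->
  (forall k, (k <= Nbar)%N ->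
     measurable [set t | Ru k (K *m eproc A B K w k t)] /\
     (pu%:E <= P [set t | Ru k (K *m eproc A B K w k t)])%E) ->
  (* v^*(k) is computed from the information available at time k *)
  (forall k t t', (forall j, (j < k)%N -> w j t = w j t') -> pol k t = pol k t') ->
  (* at each time step, (P_k) is feasible and v^*(k) is an optimal solution of it *)
  (forall k t, (k <= Nbar)%N ->
     let x := cl_state A B K w x0 pol k t in
     let z := cl_nominal A B K w x0 pol k t in
     feasibleP N A B X U Rx Ru Zf k z (pol k t x z) /\
     (forall v, feasibleP N A B X U Rx Ru Zf k z v ->
        (J k t x z (pol k t x z) <= J k t x z v)%E)) ->
  (* the closed-loop events are events (measurable) *)
  (forall k, (k <= Nbar)%N ->
     measurable [set t | X (cl_state A B K w x0 pol k t)] /\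
     measurable [set t | U (cl_input A B K w x0 pol k t)]) ->
  forall k, (k <= Nbar)%N ->
    (px%:E <= P [set t | X (cl_state A B K w x0 pol k t)])%E /\
    (pu%:E <= P [set t | U (cl_input A B K w x0 pol k t)])%E.
Proof.
move=> N_gt0 _ _ _ _ PRx PRu _ feasible meas k k_le.
have [measX measU] := meas k k_le.
have [measRx pxRx] := PRx k k_le.
have [measRu puRu] := PRu k k_le.
have tightened t := (feasible k t k_le).1.1 0%N N_gt0.
split.
- apply: (measure_tightened_ge measRx measX (cl_stateE A B K w x0 pol k) _ pxRx).
  by move=> t; case: (tightened t).
- apply: (measure_tightened_ge measRu measU (cl_inputE A B K w x0 pol k) _ puRu).
  by move=> t; case: (tightened t).
Qed.
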